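(* Let $n \ge 1$ and let $x, y$ be valid Fibonacci representations of the same length. (i) If $D(x,y) \le -n-1$, then $D(x',y') \le -n-1$ for all valid right extensions $x'$ of $x$ and $y'$ of $y$ with $|x'| = |y'|$. (ii) If $D(x,y) \ge 2n$, then $D(x',y') \ge n$ for all valid right extensions $x'$ of $x$ and $y'$ of $y$ with $|x'|=|y'|$. Consequently, for $0 \le c < n$, if $D(x,y) \notin [-n, 2n-1]$ then no pair of such right extensions satisfies $[y'] = n[x'] + c$.
   Context: For a binary word $x = x_1\cdots x_\ell$, $[x] = \sum_{j=1}^{\ell} x_j F_{\ell-j+2}$ where $F_0=0,F_1=1,F_k=F_{k-1}+F_{k-2}$. A valid Fibonacci representation is a binary word with no factor $11$ (leading zeros allowed). A word $z$ is a valid right extension of $x$ if $x$ is a prefix of $z$ and $z$ contains no $11$. For words $u,v$, $D(u,v) = [v] - n[u]$. *)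

From mathcomp Require Import all_boot all_order all_algebra.
Set Implicit Arguments. Unset Strict Implicit. Unset Printing Implicit Defensive.
Import GRing.Theory Num.Theory.
Local Open Scope ring_scope.

Fixpoint fib (k : nat) : nat :=
  match k with
  | 0 => 0
  | 1 => 1
  | (k'.+1 as k1).+1 => fib k1 + fib k'
  end%N.

(* [x] = sum_{j=1}^{l} x_j F_{l-j+2}; with 0-based index i = j-1 this is F_{l-i+1}. *)
Definition fval (x : seq bool) : nat :=
  (\sum_(i < size x) nth false x i * fib (size x - i).+1)%N.

(* a binary word with no factor 11 (leading zeros allowed) *)
Definition valid (x : seq bool) : bool :=
  ~~ has (fun i => nth false x i && nth false x i.+1) (iota 0 (size x)).

Definition valid_rext (x z : seq bool) : bool := prefix x z && valid z.

Definition D (n : nat) (u v : seq bool) : int := (fval v)%:Z - (n * fval u)%N%:Z.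

(* Let [x]' be the value of x with every Fibonacci index lowered by one.
   Appending a digit d maps ([x], [x]') to ([x] + [x]' + d, [x] + d), so
   appending d to x and e to y changes D = D(x,y) and D' = [y]' - n[x]' by
   (D, D') |-> (D + D' + e - n d, D + e - n d).  Since [x] - phi [x]' stays in
   [-1, phi - 1] (appending a digit multiplies this error by -1/phi), D' has
   the sign of D as soon as D <= -n-1 or D >= 2n.  For (i) the pair of
   conditions D <= -n-1, D' < 0 is then invariant; for (ii) the invariant is
   n <= D, n <= D + D', and 2n <= D + D' when x ends in 0, where validity of
   the extension of x forbids appending a 1 after a final 1. *)

From mathcomp Require Import all_boot all_order all_algebra.
From mathcomp Require Import realalg ring lra zify.
Import Order.TTheory GRing.Theory Num.Theory.
Set Implicit Arguments. Unset Strict Implicit. Unset Printing Implicit Defensive.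
Local Open Scope ring_scope.

Definition fval_shift (x : seq bool) : nat :=
  (\sum_(i < size x) nth false x i * fib (size x - i))%N.

Lemma fval_rcons x (d : bool) : fval (rcons x d) = (fval x + fval_shift x + d)%N.
Proof.
rewrite /fval /fval_shift size_rcons big_ord_recr /= nth_rcons ltnn eqxx subSnn.
rewrite muln1 -big_split /=; congr (_ + _)%N; apply: eq_bigr => i _.
rewrite nth_rcons ltn_ord subSn ?(ltnW (ltn_ord i)) // -mulnDr.
by congr (_ * _)%N; case: (size x - i).
Qed.

Lemma fval_shift_rcons x (d : bool) : fval_shift (rcons x d) = (fval x + d)%N.
Proof.
rewrite /fval /fval_shift size_rcons big_ord_recr /= nth_rcons ltnn eqxx subSnn.
rewrite muln1; congr (_ + _)%N; apply: eq_bigr => i _.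
by rewrite nth_rcons ltn_ord subSn ?(ltnW (ltn_ord i)).
Qed.

Definition Dshift (n : nat) (u v : seq bool) : int :=
  (fval_shift v)%:Z - (n * fval_shift u)%N%:Z.

Lemma D_rcons n x y (d e : bool) :
  D n (rcons x d) (rcons y e) = D n x y + Dshift n x y + e%:Z - (n * d)%N%:Z.
Proof. rewrite /D /Dshift !fval_rcons; lia. Qed.

Lemma Dshift_rcons n x y (d e : bool) :
  Dshift n (rcons x d) (rcons y e) = D n x y + e%:Z - (n * d)%N%:Z.
Proof. rewrite /D /Dshift !fval_shift_rcons; lia. Qed.

Section Golden.
Variable R : rcfType.

Definition golden : R := (1 + Num.sqrt 5) / 2.

Let sqrt5_sqr : Num.sqrt 5 * Num.sqrt 5 = 5 :> R.
Proof. by rewrite -expr2 sqr_sqrtr ?ler0n. Qed.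

Lemma golden_sqr : golden * golden = golden + 1.
Proof.
apply/eqP; rewrite -subr_eq0; apply/eqP.
have -> : golden * golden - (golden + 1) = (Num.sqrt 5 * Num.sqrt 5 - 5) / 4.
  by rewrite /golden; field.
by rewrite sqrt5_sqr subrr mul0r.
Qed.

Lemma golden_gt1 : 1 < golden.
Proof. by have := sqrtr_ge0 (5 : R); have := sqrt5_sqr; rewrite /golden; nra. Qed.

Lemma golden_lt2 : golden < 2.
Proof. by have := sqrtr_ge0 (5 : R); have := sqrt5_sqr; rewrite /golden; nra. Qed.

Lemma golden_gt0 : 0 < golden.
Proof. exact: lt_trans golden_gt1. Qed.

Definition golden_defect (x : seq bool) : R :=
  (fval x)%:R - golden * (fval_shift x)%:R.

Lemma golden_defect_rcons x (d : bool) :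
  golden * golden_defect (rcons x d) = - golden_defect x - d%:R.
Proof.
rewrite /golden_defect fval_rcons fval_shift_rcons !natrD mulrBr mulrA golden_sqr.
ring.
Qed.

Lemma golden_defect_bounds x : -1 <= golden_defect x <= golden - 1.
Proof.
elim/last_ind: x => [|x d /andP[lo hi]].
  rewrite /golden_defect /fval /fval_shift !big_ord0 mulr0 subr0.
  by rewrite mulr0n; have := golden_gt1; lra.
have d01 : 0 <= (d%:R : R) <= 1 by case: d; rewrite /= ?ler01 ?lexx.
have e := golden_defect_rcons x d.
have g1 : golden * (golden - 1) = 1 by rewrite mulrBr golden_sqr mulr1; ring.
by apply/andP; split; rewrite -(ler_pM2l golden_gt0) ?e ?g1; lra.
Qed.

Lemma golden_mul_Dshift n x y :
  golden * (Dshift n x y)%:~R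
  = (D n x y)%:~R - golden_defect y + n%:R * golden_defect x.
Proof.
by rewrite /Dshift /D /golden_defect !rmorphB /= -!pmulrn natrM; ring.
Qed.
End Golden.

Lemma Dshift_lt0 n x y :
  (1 <= n)%N -> D n x y <= - (n%:Z) - 1 -> Dshift n x y < 0.
Proof.
move=> n_gt0 hD; rewrite -(ltrz0 realalg) -(pmulr_rlt0 _ (golden_gt0 _)).
rewrite golden_mul_Dshift.
have /andP[_ hx] := golden_defect_bounds realalg x.
have /andP[hy _] := golden_defect_bounds realalg y.
have N1 : 1 <= n%:R :> realalg by rewrite ler1n.
have rhsE : (- n%:Z - 1)%:~R = - n%:R - 1 :> realalg by rewrite intrD intrN.
move: hD; rewrite -(ler_int realalg) rhsE => hD.
have := golden_lt2 realalg; nra.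
Qed.

Lemma Dshift_gt0 n x y :
  (1 <= n)%N -> 2 * n%:Z <= D n x y -> 0 < Dshift n x y.
Proof.
move=> n_gt0 hD; rewrite -(ltr0z realalg) -(pmulr_rgt0 _ (golden_gt0 _)).
rewrite golden_mul_Dshift.
have /andP[hx _] := golden_defect_bounds realalg x.
have /andP[_ hy] := golden_defect_bounds realalg y.
have N1 : 1 <= n%:R :> realalg by rewrite ler1n.
have rhsE : (2 * n%:Z)%:~R = 2 * n%:R :> realalg by rewrite intrM.
move: hD; rewrite -(ler_int realalg) rhsE => hD.
have := golden_lt2 realalg; nra.
Qed.

Lemma valid_rcons x (d : bool) :
  valid (rcons x d) -> valid x && ~~ (last false x && d).
Proof.
rewrite /valid size_rcons => /hasPn no11; apply/andP; split.
  apply/hasPn => i; rewrite mem_iota add0n => /andP[_ lt_ix].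
  have := no11 i; rewrite mem_iota add0n ltnS (ltnW lt_ix) !nth_rcons lt_ix => /(_ isT).
  by case: ltnP => // /(nth_default false) ->; rewrite andbF.
case/lastP: x no11 => [|x b] // no11; rewrite last_rcons.
have := no11 (size x); rewrite mem_iota add0n size_rcons ltnS leqnSn => /(_ isT).
by rewrite !nth_rcons !size_rcons ltnSn !ltnn !eqxx.
Qed.

Lemma D_cat_le n x y u v : (1 <= n)%N -> size u = size v ->
  D n x y <= - (n%:Z) - 1 -> D n (x ++ u) (y ++ v) <= - (n%:Z) - 1.
Proof.
move=> n_gt0; elim/last_ind: u v => [|u d IH] v.
  by case: v => // _; rewrite !cats0.
case/lastP: v => [|v e]; first by rewrite size_rcons.
rewrite !size_rcons => -[/IH{}IH] /IH hD.
have := Dshift_lt0 n_gt0 hD.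
by rewrite -!rcons_cat D_rcons; case: d; case: e => /=; lia.
Qed.

Definition D_lower_invariant n x y :=
  [/\ n%:Z <= D n x y, n%:Z <= D n x y + Dshift n x y &
      (~~ last false x -> 2 * n%:Z <= D n x y + Dshift n x y)].

Lemma D_lower_invariant_cat n x y u v : (1 <= n)%N -> size u = size v ->
  valid (x ++ u) -> 2 * n%:Z <= D n x y -> D_lower_invariant n (x ++ u) (y ++ v).
Proof.
move=> n_gt0; elim/last_ind: u v => [|u d IH] v.
  case: v => // _ _ hD; rewrite !cats0.
  by have := Dshift_gt0 n_gt0 hD; split; lia.
case/lastP: v => [|v e]; first by rewrite size_rcons.
rewrite !size_rcons -!rcons_cat => -[/IH{}IH] /valid_rcons/andP[/IH{}IH not11].
case/IH=> lo lo_shift lo_last; rewrite /D_lower_invariant D_rcons Dshift_rcons last_rcons.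
move: not11 lo_last; case: last => [|_ /(_ isT) lo_last].
  by case: d => // _ _; case: e => /=; split; lia.
by case: d; case: e => /=; split; lia.
Qed.

Lemma D_cat_ge n x y u v : (1 <= n)%N -> size u = size v ->
  valid (x ++ u) -> 2 * n%:Z <= D n x y -> n%:Z <= D n (x ++ u) (y ++ v).
Proof. by move=> n_gt0 suv vxu /(D_lower_invariant_cat n_gt0 suv vxu)[]. Qed.

Lemma valid_rext_cat x y x' y' : size x = size y ->
  valid_rext x x' -> valid_rext y y' -> size x' = size y' ->
  exists u v, [/\ x' = x ++ u, y' = y ++ v, size u = size v & valid (x ++ u)].
Proof.
move=> sxy /andP[/prefixP[u ->] vxu] /andP[/prefixP[v ->] _].
by rewrite !size_cat sxy => /addnI suv; exists u, v.
Qed.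

Theorem theorem11 (n : nat) (x y : seq bool) :
  (1 <= n)%N -> valid x -> valid y -> size x = size y ->
  [/\ (D n x y <= - (n%:Z) - 1 ->
        forall x' y', valid_rext x x' -> valid_rext y y' -> size x' = size y' ->
          D n x' y' <= - (n%:Z) - 1),
      (D n x y >= 2 * n%:Z ->
        forall x' y', valid_rext x x' -> valid_rext y y' -> size x' = size y' ->
          D n x' y' >= n%:Z) &
      (forall c : nat, (c < n)%N ->
        ~ (- (n%:Z) <= D n x y <= 2 * n%:Z - 1) ->
        forall x' y', valid_rext x x' -> valid_rext y y' -> size x' = size y' ->
          (fval y')%:Z <> (n%:Z) * (fval x')%:Z + c%:Z)].
Proof.
move=> n_gt0 _ _ sxy.
have below : D n x y <= - (n%:Z) - 1 ->
    forall x' y', valid_rext x x' -> valid_rext y y' -> size x' = size y' ->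
      D n x' y' <= - (n%:Z) - 1.
  move=> hD x' y' ext_x ext_y /(valid_rext_cat sxy ext_x ext_y)[u [v [-> -> suv _]]].
  exact: D_cat_le.
have above : D n x y >= 2 * n%:Z ->
    forall x' y', valid_rext x x' -> valid_rext y y' -> size x' = size y' ->
      D n x' y' >= n%:Z.
  move=> hD x' y' ext_x ext_y /(valid_rext_cat sxy ext_x ext_y)[u [v [-> -> suv vxu]]].
  exact: D_cat_ge.
split=> // c lt_cn D_out x' y' ext_x ext_y sx'y' eq_c.
have D'_c : D n x' y' = c%:Z by rewrite /D eq_c PoszM addrAC subrr add0r.
have [D_le|D_gt] := lerP (D n x y) (- (n%:Z) - 1).
  by have := below D_le _ _ ext_x ext_y sx'y'; rewrite D'_c; lia.
have D_ge : D n x y >= 2 * n%:Z by move: D_out D_gt; lia.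
by have := above D_ge _ _ ext_x ext_y sx'y'; rewrite D'_c; lia.
Qed.
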